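(* Let $n\ge 2$ be an integer, let $a_1,\dots,a_n>0$ with $\sum_{k=1}^n a_k=1$, and let $c_k,d_k,\beta_k\in\mathbb{R}$ ($k=1,\dots,n$) with $\max_{1\le k\le n}|d_k|<1$. Put $\alpha_1=0$, $\alpha_k=\sum_{j=1}^{k-1}a_j$ for $k=2,\dots,n+1$, and $S_k(x)=a_kx+\alpha_k$. Let $f\in C[0;1]$ be a continuous function satisfying $f=G(f)$, where $$[G(f)](t)=\sum_{k=1}^n\bigl(d_k f(S_k^{-1}(t))+c_k t+\beta_k\bigr)\chi_{I_k}(t),\qquad I_1=[0;\alpha_2],\ I_k=(\alpha_k;\alpha_{k+1}]\ (k\ge2).$$ Suppose there is an index $i$ with $|d_i|>a_i$. Then for every $\alpha\in(0;1]$ satisfying $$\alpha\le\min_{1\le j\le n}\frac{\ln|d_j|}{\ln a_j}$$ there exists a constant $C\ge0$ such that $|f(x)-f(y)|\le C|x-y|^{\alpha}$ for all $x,y\in[0;1]$ (i.e. $f$ satisfies the Hölder condition with exponent $\alpha$).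
   Context: Here $\chi_I$ is the indicator function of the interval $I$. A continuous function $f$ with $G(f)=f$ is called an (affine) self-similar function with self-similarity parameters $\{a_k\},\{c_k\},\{d_k\},\{\beta_k\}$. Convention: if $d_j=0$, then $\ln|d_j|=-\infty$ and the ratio $\ln|d_j|/\ln a_j$ is interpreted as $+\infty$. A function $f$ on $[0;1]$ satisfies the Hölder condition with exponent $\alpha\in(0;1]$ if $\sup_{x\ne y}|f(x)-f(y)|/|x-y|^\alpha<\infty$. *)

(* concrete reals R. Indices k range over 1..n (nat). *)
From Stdlib Require Import Reals Lra.
Open Scope R_scope.

Fixpoint sum1 (n : nat) (F : nat -> R) : R :=
  match n with
  | O => 0
  | S m => sum1 m F + F (S m)
  end.

Definition alph (a : nat -> R) (k : nat) : R := sum1 (k - 1) a.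

Definition Smap (a : nat -> R) (k : nat) (x : R) : R := a k * x + alph a k.
Definition Sinv (a : nat -> R) (k : nat) (t : R) : R := (t - alph a k) / a k.

Definition chiI (a : nat -> R) (k : nat) (t : R) : R :=
  if Nat.eqb k 1 then
    (if Rle_dec 0 t then (if Rle_dec t (alph a 2) then 1 else 0) else 0)
  else
    (if Rlt_dec (alph a k) t then (if Rle_dec t (alph a (S k)) then 1 else 0) else 0).

Definition Gop (n : nat) (a c d beta : nat -> R) (f : R -> R) (t : R) : R :=
  sum1 n (fun k => (d k * f (Sinv a k t) + c k * t + beta k) * chiI a k t).

Definition cont01 (f : R -> R) : Prop :=
  forall x, 0 <= x <= 1 -> forall eps, 0 < eps ->
    exists delta, 0 < delta /\
      forall y, 0 <= y <= 1 -> Rabs (y - x) < delta -> Rabs (f y - f x) < eps.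

From Stdlib Require Import Reals Lra Lia.
Open Scope R_scope.

(* Increments of f are measured against the gauge C h^al - E h. Applying the self-similarity
   on the cell I_k turns an increment of f over a length h / a_k into one over the length h,
   multiplied by d_k and shifted by c_k h. Since |d_k| <= a_k^al the gauge absorbs the factor
   d_k; the shift is absorbed by the margin C (1 - a_k^(1-al)) h^al, which is positive because
   a cell with |d_i| > a_i forces al < 1, or, when |d_k| > a_k, by the correction - E h.
   Starting from the boundedness of f at scales >= min a_k and descending by factors max a_k,
   the gauge bound holds first at the fixed points 0 of S_1 and 1 of S_n, then for increments
   inside one cell; an increment straddling a node splits into increments at the end points of
   two neighbouring cells, which are images of increments at 1 and at 0. *)

Lemma exp_le_compat x y : x <= y -> exp x <= exp y.
Proof. intros [Hlt | ->]; [left; exact (exp_increasing _ _ Hlt) | apply Rle_refl]. Qed.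

Lemma Rpower_pos x y : 0 < Rpower x y.
Proof. apply exp_pos. Qed.

Lemma Rpower_le_exponent x y z : 0 < x <= 1 -> y <= z -> Rpower x z <= Rpower x y.
Proof.
  intros [Hx0 [Hx1 | ->]] Hyz; unfold Rpower; apply exp_le_compat.
  - assert (ln x < 0) by (rewrite <- ln_1; apply ln_increasing; lra). nra.
  - rewrite ln_1; lra.
Qed.

Lemma Rpower_ge_self x al : 0 < x <= 1 -> al <= 1 -> x <= Rpower x al.
Proof.
  intros Hx Hal. rewrite <- (Rpower_1 x) at 1 by lra. now apply Rpower_le_exponent.
Qed.

Lemma Rpower_lt_1 x y : 0 < x < 1 -> 0 < y -> Rpower x y < 1.
Proof.
  intros Hx Hy. unfold Rpower. rewrite <- exp_0. apply exp_increasing.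
  assert (ln x < 0) by (rewrite <- ln_1; apply ln_increasing; lra). nra.
Qed.

Lemma Rpower_ge_of_log_ratio x y al :
  0 < x < 1 -> 0 < y -> al <= ln y / ln x -> y <= Rpower x al.
Proof.
  intros Hx Hy Hal. assert (Hln : ln x < 0) by (rewrite <- ln_1; apply ln_increasing; lra).
  unfold Rpower. rewrite <- (exp_ln y) at 1 by exact Hy. apply exp_le_compat.
  apply Rmult_le_compat_r with (r := - ln x) in Hal; [|lra].
  replace (ln y / ln x * - ln x) with (- ln y) in Hal by (field; lra). lra.
Qed.

Lemma Rdiv_in_unit s a : 0 < s <= a -> 0 < s / a <= 1.
Proof.
  intros Hs. split; [apply Rdiv_lt_0_compat; lra|].
  apply Rmult_le_reg_r with a; [lra|]. unfold Rdiv. rewrite Rmult_assoc, Rinv_l; lra.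
Qed.

Lemma exists_small_pos x y : 0 < x -> 0 < y -> exists s, 0 < s /\ s < x /\ s < y.
Proof.
  intros Hx Hy. exists (Rmin x y / 2).
  pose proof (Rmin_l x y). pose proof (Rmin_r x y). pose proof (Rmin_pos x y Hx Hy). lra.
Qed.

Lemma eq0_of_Rabs_lt_eps (D K : R) : (forall eps, 0 < eps -> Rabs D < K * eps) -> D = 0.
Proof.
  intros Hsmall. destruct (Req_dec D 0) as [|HD]; [assumption|].
  assert (HD0 : 0 < Rabs D) by now apply Rabs_pos_lt.
  assert (HK : 0 < K) by (specialize (Hsmall 1 Rlt_0_1); lra).
  specialize (Hsmall (Rabs D / K) ltac:(apply Rdiv_lt_0_compat; lra)).
  replace (K * (Rabs D / K)) with (Rabs D) in Hsmall by (field; lra). lra.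
Qed.

Lemma finite_argmax (n : nat) (g : nat -> R) :
  (1 <= n)%nat ->
  exists j, (1 <= j <= n)%nat /\ forall k, (1 <= k <= n)%nat -> g k <= g j.
Proof.
  induction n as [|n IH]; intros Hn; [lia|].
  destruct (Nat.eq_dec n 0) as [-> | Hn0].
  - exists 1%nat. split; [lia|]. intros k Hk. replace k with 1%nat by lia. apply Rle_refl.
  - destruct IH as [j [Hj Hmax]]; [lia|].
    destruct (Rle_lt_dec (g (S n)) (g j)) as [Hle | Hlt].
    + exists j. split; [lia|]. intros k Hk.
      destruct (Nat.eq_dec k (S n)) as [-> | Hk']; [exact Hle | apply Hmax; lia].
    + exists (S n). split; [lia|]. intros k Hk.
      destruct (Nat.eq_dec k (S n)) as [-> | Hk']; [apply Rle_refl|].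
      apply Rle_trans with (g j); [apply Hmax; lia | now left].
Qed.

Lemma finite_argmin (n : nat) (g : nat -> R) :
  (1 <= n)%nat ->
  exists j, (1 <= j <= n)%nat /\ forall k, (1 <= k <= n)%nat -> g j <= g k.
Proof.
  intros Hn. destruct (finite_argmax n (fun k => - g k) Hn) as [j [Hj Hmax]].
  exists j. split; [exact Hj|]. intros k Hk. specialize (Hmax k Hk). lra.
Qed.

Lemma eventually_forall_finite (n : nat) (P : nat -> R -> Prop) :
  (forall k, (1 <= k <= n)%nat -> exists B, forall B', B <= B' -> P k B') ->
  exists B, forall B', B <= B' -> forall k, (1 <= k <= n)%nat -> P k B'.
Proof.
  induction n as [|n IH]; intros Hev.
  - exists 0. intros B' _ k Hk. lia.
  - destruct IH as [B1 H1]; [intros k Hk; apply Hev; lia|].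
    destruct (Hev (S n)) as [B2 H2]; [lia|].
    exists (Rmax B1 B2). intros B' HB' k Hk.
    destruct (Nat.eq_dec k (S n)) as [-> | Hk'].
    + apply H2. apply Rle_trans with (Rmax B1 B2); [apply Rmax_r | exact HB'].
    + apply H1; [apply Rle_trans with (Rmax B1 B2); [apply Rmax_l | exact HB'] | lia].
Qed.

Lemma scale_induction (P : R -> Prop) (h0 r : R) :
  0 < h0 -> 0 < r < 1 ->
  (forall h, h0 <= h -> P h) ->
  (forall h, 0 < h < h0 -> (forall h', h / r <= h' -> P h') -> P h) ->
  forall h, 0 < h -> P h.
Proof.
  intros Hh0 Hr Hbase Hstep.
  assert (Hlevel : forall m h, h0 * r ^ m <= h -> P h).
  { induction m as [|m IH]; intros h Hh; simpl in Hh.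
    - apply Hbase. lra.
    - destruct (Rle_lt_dec h0 h) as [Hle | Hlt]; [now apply Hbase|].
      assert (Hrm : 0 < r ^ m) by (apply pow_lt; lra).
      assert (Hrm' : h0 * r ^ m <= h / r).
      { apply Rmult_le_reg_r with r; [lra|].
        replace (h / r * r) with h by (field; lra). lra. }
      assert (0 < h0 * (r * r ^ m)) by (apply Rmult_lt_0_compat; [lra | nra]).
      apply Hstep; [split; [lra | exact Hlt]|].
      intros h' Hh'. apply IH. lra. }
  intros h Hh.
  destruct (pow_lt_1_zero r ltac:(rewrite Rabs_right; lra) (h / h0)
              ltac:(apply Rdiv_lt_0_compat; lra)) as [N HN].
  specialize (HN N (le_n N)). rewrite Rabs_right in HN by (apply Rle_ge, pow_le; lra).
  apply (Hlevel N). apply Rmult_lt_compat_l with (r := h0) in HN; [|exact Hh0].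
  replace (h0 * (h / h0)) with h in HN by (field; lra). lra.
Qed.

Lemma cont01_bounded (f : R -> R) :
  cont01 f -> exists M, forall t, 0 <= t <= 1 -> Rabs (f t) <= M.
Proof.
  intros Hf. set (clamp x := Rmax 0 (Rmin 1 x)).
  assert (clamp_id : forall t, 0 <= t <= 1 -> clamp t = t).
  { intros t Ht. unfold clamp. rewrite Rmin_right, Rmax_right; lra. }
  assert (clamp_range : forall x, 0 <= clamp x <= 1).
  { intros x. unfold clamp, Rmax, Rmin. repeat destruct Rle_dec; lra. }
  assert (clamp_contract : forall x t, 0 <= t <= 1 -> Rabs (clamp x - t) <= Rabs (x - t)).
  { intros x t Ht. unfold clamp, Rmax, Rmin. repeat destruct Rle_dec;
      unfold Rabs; repeat destruct Rcase_abs; lra. }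
  set (g x := f (clamp x)).
  assert (g_cont : forall t, 0 <= t <= 1 -> continuity_pt g t).
  { intros t Ht eps Heps. destruct (Hf t Ht eps Heps) as [delta [Hdelta Hclose]].
    exists delta. split; [exact Hdelta|]. intros x [_ Hx]. simpl in *. unfold R_dist in *.
    unfold g. rewrite (clamp_id t Ht). apply Hclose; [apply clamp_range|].
    eapply Rle_lt_trans; [apply clamp_contract, Ht | exact Hx]. }
  destruct (continuity_ab_maj g 0 1) as [xM [HxM _]]; [lra | exact g_cont |].
  destruct (continuity_ab_min g 0 1) as [xm [Hxm _]]; [lra | exact g_cont |].
  exists (Rmax (Rabs (g xM)) (Rabs (g xm))). intros t Ht.
  specialize (HxM t Ht). specialize (Hxm t Ht). unfold g in *. rewrite (clamp_id t Ht) in HxM, Hxm.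
  apply Rabs_le.
  pose proof (Rle_abs (f (clamp xM))). pose proof (Rle_abs (- f (clamp xm))). rewrite Rabs_Ropp in *.
  pose proof (Rmax_l (Rabs (f (clamp xM))) (Rabs (f (clamp xm)))).
  pose proof (Rmax_r (Rabs (f (clamp xM))) (Rabs (f (clamp xm)))).
  lra.
Qed.

Definition hoelder_gauge (C E al h : R) : R := C * Rpower h al - E * h.

Lemma hoelder_gauge_le C E al s h :
  0 <= C -> 0 <= E -> 0 <= al -> 0 < s <= h -> hoelder_gauge C E al s <= C * Rpower h al.
Proof.
  intros HC HE Hal Hs. unfold hoelder_gauge.
  assert (Rpower s al <= Rpower h al) by (apply Rle_Rpower_l; lra).
  assert (0 <= E * s) by nra. nra.
Qed.

Lemma gauge_step al a d c C E h X :
  0 < al <= 1 -> 0 < a < 1 -> Rabs d <= Rpower a al -> 0 <= C -> 0 <= E ->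
  (a < Rabs d -> Rabs c * a <= E * (Rabs d - a)) ->
  Rabs c + E <= C * (1 - Rpower a (1 - al)) ->
  0 < h <= a -> X <= hoelder_gauge C E al (h / a) ->
  Rabs d * X + Rabs c * h <= hoelder_gauge C E al h.
Proof.
  intros Hal Ha Hd HC HE Hexpand Hmargin Hh HX. unfold hoelder_gauge in *.
  set (u := Rpower (h / a) al) in *.
  assert (Hu : 0 < u) by apply Rpower_pos.
  assert (Hscale : u * Rpower a al = Rpower h al).
  { unfold u. rewrite Rpower_mult_distr by (try apply Rdiv_lt_0_compat; lra).
    f_equal. field. lra. }
  assert (Hsplit : a = Rpower a (1 - al) * Rpower a al).
  { rewrite <- Rpower_plus. replace (1 - al + al) with 1 by ring. now rewrite Rpower_1 by lra. }
  assert (Hhpow : h <= Rpower h al) by (apply Rpower_ge_self; lra).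
  assert (Hv : 0 <= E * (h / a)) by (apply Rmult_le_pos; [lra | apply Rlt_le, Rdiv_lt_0_compat; lra]).
  pose proof (Rabs_pos d) as Hd0. pose proof (Rabs_pos c) as Hc0.
  destruct (Rle_lt_dec (Rabs d) a) as [Hsmall | Hbig].
  - (* |d| X <= a^(1-al) C h^al, and the margin C (1 - a^(1-al)) h^al pays for c h *)
    assert (Rabs d * X <= a * (C * u)).
    { apply Rle_trans with (Rabs d * (C * u)); [apply Rmult_le_compat_l; lra|].
      apply Rmult_le_compat_r; [nra | exact Hsmall]. }
    assert (a * (C * u) = Rpower a (1 - al) * (C * Rpower h al)).
    { rewrite <- Hscale. rewrite Hsplit at 1. ring. }
    assert ((Rabs c + E) * h <= C * (1 - Rpower a (1 - al)) * Rpower h al).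
    { apply Rle_trans with ((Rabs c + E) * Rpower h al);
        [apply Rmult_le_compat_l | apply Rmult_le_compat_r]; lra. }
    nra.
  - (* |d| > a: the correction - E h pays for c h *)
    specialize (Hexpand Hbig).
    assert (Rabs d * X <= C * Rpower h al - Rabs d * (E * (h / a))).
    { apply Rle_trans with (Rabs d * (C * u - E * (h / a))); [apply Rmult_le_compat_l; lra|].
      rewrite <- Hscale. assert (Rabs d * (C * u) <= Rpower a al * (C * u)) by
        (apply Rmult_le_compat_r; nra). nra. }
    assert (Rabs c * h <= E * (Rabs d - a) * (h / a)).
    { replace (Rabs c * h) with (Rabs c * a * (h / a)) by (field; lra).
      apply Rmult_le_compat_r; [apply Rlt_le, Rdiv_lt_0_compat|]; lra. }
    assert (Rabs d * (E * (h / a)) - E * (Rabs d - a) * (h / a) = E * h) by (field; lra).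
    lra.
Qed.

Lemma exists_correction_constant (n : nat) (a c d : nat -> R) :
  exists E, 0 <= E /\ forall k, (1 <= k <= n)%nat ->
    a k < Rabs (d k) -> Rabs (c k) * a k <= E * (Rabs (d k) - a k).
Proof.
  destruct (eventually_forall_finite n
    (fun k E => a k < Rabs (d k) -> Rabs (c k) * a k <= E * (Rabs (d k) - a k))) as [B HB].
  { intros k _. destruct (Rlt_dec (a k) (Rabs (d k))) as [Hlt | Hge].
    - exists (Rabs (c k) * a k / (Rabs (d k) - a k)). intros B' HB' _.
      replace (Rabs (c k) * a k) with (Rabs (c k) * a k / (Rabs (d k) - a k) * (Rabs (d k) - a k))
        at 1 by (field; lra).
      apply Rmult_le_compat_r; lra.
    - exists 0. intros B' _ Hlt. contradiction. }
  exists (Rmax B 0). split; [apply Rmax_r | apply HB, Rmax_l].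
Qed.

Lemma exists_margin_constant (n : nat) (a c : nat -> R) (al E B : R) :
  (forall k, (1 <= k <= n)%nat -> 0 < a k < 1) -> al < 1 ->
  exists C, 0 <= C /\ B <= C /\ forall k, (1 <= k <= n)%nat ->
    Rabs (c k) + E <= C * (1 - Rpower (a k) (1 - al)).
Proof.
  intros Ha Hal.
  destruct (eventually_forall_finite n
    (fun k C => Rabs (c k) + E <= C * (1 - Rpower (a k) (1 - al)))) as [B0 HB0].
  { intros k Hk. assert (Hq : Rpower (a k) (1 - al) < 1) by (apply Rpower_lt_1; [apply Ha, Hk | lra]).
    exists ((Rabs (c k) + E) / (1 - Rpower (a k) (1 - al))). intros C' HC'.
    replace (Rabs (c k) + E) with
      ((Rabs (c k) + E) / (1 - Rpower (a k) (1 - al)) * (1 - Rpower (a k) (1 - al))) at 1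
      by (field; lra).
    apply Rmult_le_compat_r; lra. }
  set (C := Rmax (Rmax B0 B) 0).
  assert (HB0C : B0 <= C) by (apply Rle_trans with (Rmax B0 B); [apply Rmax_l | apply Rmax_l]).
  assert (HBC : B <= C) by (apply Rle_trans with (Rmax B0 B); [apply Rmax_r | apply Rmax_l]).
  exists C. split; [apply Rmax_r | split; [exact HBC | now apply HB0]].
Qed.

(** * Cells and the self-similarity equation *)

Lemma sum1_zero (n : nat) (F : nat -> R) :
  (forall j, (1 <= j <= n)%nat -> F j = 0) -> sum1 n F = 0.
Proof.
  induction n as [|n IH]; intros Hzero; simpl; [reflexivity|].
  rewrite IH by (intros j Hj; apply Hzero; lia). rewrite Hzero by lia. ring.
Qed.

Lemma sum1_single (n : nat) (F : nat -> R) (k : nat) :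
  (1 <= k <= n)%nat -> (forall j, (1 <= j <= n)%nat -> j <> k -> F j = 0) -> sum1 n F = F k.
Proof.
  induction n as [|n IH]; intros Hk Hzero; [lia|]. simpl.
  destruct (Nat.eq_dec k (S n)) as [-> | Hk'].
  - rewrite sum1_zero by (intros j Hj; apply Hzero; lia). ring.
  - rewrite IH by (lia || (intros j Hj Hjk; apply Hzero; lia)).
    rewrite (Hzero (S n)) by lia. ring.
Qed.

Lemma sum1_le_mono (n m : nat) (F : nat -> R) :
  (m <= n)%nat -> (forall k, (m < k <= n)%nat -> 0 <= F k) -> sum1 m F <= sum1 n F.
Proof.
  induction n as [|n IH]; intros Hmn Hpos.
  - replace m with 0%nat by lia. apply Rle_refl.
  - destruct (Nat.eq_dec m (S n)) as [-> | Hm]; [apply Rle_refl|]. simpl.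
    assert (0 <= F (S n)) by (apply Hpos; lia).
    assert (sum1 m F <= sum1 n F) by (apply IH; [lia | intros k Hk; apply Hpos; lia]).
    lra.
Qed.

Lemma alph_1 (a : nat -> R) : alph a 1 = 0.
Proof. reflexivity. Qed.

Lemma alph_S (a : nat -> R) (k : nat) : (1 <= k)%nat -> alph a (S k) = alph a k + a k.
Proof.
  intros Hk. unfold alph. destruct k as [|k]; [lia|].
  rewrite Nat.sub_succ, Nat.sub_0_r. simpl. now rewrite Nat.sub_0_r.
Qed.

Lemma exists_cell (a : nat -> R) (m : nat) (t : R) :
  0 < t <= alph a (S m) -> exists k, (1 <= k <= m)%nat /\ alph a k < t <= alph a (S k).
Proof.
  induction m as [|m IH]; intros Ht.
  - rewrite alph_1 in Ht. lra.
  - destruct (Rle_lt_dec t (alph a (S m))) as [Hle | Hlt].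
    + destruct IH as [k [Hk Hkt]]; [lra|]. exists k. split; [lia | exact Hkt].
    + exists (S m). split; [lia | lra].
Qed.

Definition in_cell (a : nat -> R) (k : nat) (t : R) : Prop :=
  (alph a k < t \/ (k = 1%nat /\ 0 <= t)) /\ t <= alph a (S k).

Section SelfSimilarFunction.

Variables (n : nat) (a c d beta : nat -> R) (f : R -> R).
Hypothesis n_ge2 : (2 <= n)%nat.
Hypothesis a_pos : forall k, (1 <= k <= n)%nat -> 0 < a k.
Hypothesis sum_a : sum1 n a = 1.
Hypothesis f_cont : cont01 f.
Hypothesis f_fixed : forall t, 0 <= t <= 1 -> f t = Gop n a c d beta f t.

Lemma alph_le j k : (1 <= j <= k)%nat -> (k <= S n)%nat -> alph a j <= alph a k.
Proof.
  intros Hjk Hk. unfold alph. apply sum1_le_mono; [lia|].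
  intros i Hi. left. apply a_pos. lia.
Qed.

Lemma alph_last : alph a (S n) = 1.
Proof. unfold alph. rewrite Nat.sub_succ, Nat.sub_0_r. exact sum_a. Qed.

Lemma alph_range k : (1 <= k <= S n)%nat -> 0 <= alph a k <= 1.
Proof.
  intros Hk. rewrite <- alph_last, <- (alph_1 a). split; apply alph_le; lia.
Qed.

Lemma a_lt_1 k : (1 <= k <= n)%nat -> a k < 1.
Proof.
  intros Hk. rewrite <- alph_last.
  destruct (Nat.eq_dec k 1) as [-> | Hk1].
  - assert (H3 : alph a 3 <= alph a (S n)) by (apply alph_le; lia).
    rewrite (alph_S a 2), (alph_S a 1), alph_1 in H3 by lia.
    pose proof (a_pos 2 ltac:(lia)). lra.
  - assert (Hk' : alph a (S k) <= alph a (S n)) by (apply alph_le; lia).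
    assert (H2 : alph a 2 <= alph a k) by (apply alph_le; lia).
    rewrite alph_S in Hk' by lia. rewrite (alph_S a 1), alph_1 in H2 by lia.
    pose proof (a_pos 1 ltac:(lia)). lra.
Qed.

Lemma chiI_own_cell k t : (1 <= k)%nat -> in_cell a k t -> chiI a k t = 1.
Proof.
  intros Hk [Hlo Hhi]. unfold chiI.
  destruct (Nat.eqb_spec k 1) as [-> | Hk1].
  - rewrite alph_1 in Hlo.
    destruct (Rle_dec 0 t); destruct (Rle_dec t (alph a 2)); try reflexivity; lra.
  - destruct Hlo as [Hlo | [Hk1' _]]; [|contradiction].
    destruct (Rlt_dec (alph a k) t); destruct (Rle_dec t (alph a (S k))); try reflexivity; lra.
Qed.

Lemma chiI_other_cell j k t :
  (1 <= j <= n)%nat -> (1 <= k <= n)%nat -> j <> k -> in_cell a k t -> chiI a j t = 0.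
Proof.
  intros Hj Hk Hjk [Hlo Hhi]. unfold chiI.
  destruct (Nat.lt_ge_cases j k) as [Hlt | Hgt].
  - destruct Hlo as [Hlo | [-> _]]; [|lia].
    assert (alph a (S j) <= alph a k) by (apply alph_le; lia).
    destruct (Nat.eqb_spec j 1) as [-> | _].
    + destruct (Rle_dec 0 t); destruct (Rle_dec t (alph a 2)); try reflexivity; lra.
    + destruct (Rlt_dec (alph a j) t); destruct (Rle_dec t (alph a (S j))); try reflexivity; lra.
  - assert (alph a (S k) <= alph a j) by (apply alph_le; lia).
    destruct (Nat.eqb_spec j 1) as [-> | _]; [lia|].
    destruct (Rlt_dec (alph a j) t); try reflexivity; lra.
Qed.

Lemma fixed_on_cell k t :
  (1 <= k <= n)%nat -> in_cell a k t -> f t = d k * f (Sinv a k t) + c k * t + beta k.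
Proof.
  intros Hk Hcell.
  assert (Ht : 0 <= t <= 1).
  { destruct Hcell as [Hlo Hhi]. pose proof (alph_range k ltac:(lia)).
    pose proof (alph_range (S k) ltac:(lia)). destruct Hlo as [Hlo | [_ Hlo]]; lra. }
  rewrite f_fixed by exact Ht. unfold Gop.
  rewrite (sum1_single n _ k Hk).
  - rewrite chiI_own_cell by (lia || exact Hcell). ring.
  - intros j Hj Hjk. rewrite (chiI_other_cell j k) by assumption. ring.
Qed.

(* Only continuity of f gives this: the left end point of I_k belongs to I_(k-1). *)
Lemma fixed_at_left_end k :
  (2 <= k <= n)%nat -> f (alph a k) = d k * f 0 + c k * alph a k + beta k.
Proof.
  intros Hk. pose proof (a_pos k ltac:(lia)) as Hak.
  pose proof (alph_range k ltac:(lia)) as HA.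
  pose proof (alph_range (S k) ltac:(lia)) as HA'. rewrite alph_S in HA' by lia.
  apply Rminus_diag_uniq.
  apply (eq0_of_Rabs_lt_eps _ (1 + Rabs (d k) + Rabs (c k) * a k)). intros eps Heps.
  destruct (f_cont (alph a k) HA eps Heps) as [dA [HdA HcontA]].
  destruct (f_cont 0 ltac:(lra) eps Heps) as [d0 [Hd0 Hcont0]].
  destruct (exists_small_pos 1 d0) as [s1 [Hs1 [Hs11 Hs1d0]]]; [lra | exact Hd0 |].
  destruct (exists_small_pos s1 (dA / a k)) as [s2 [Hs2 [Hs21 Hs2dA]]];
    [exact Hs1 | apply Rdiv_lt_0_compat; lra |].
  destruct (exists_small_pos s2 eps) as [s [Hs0 [Hs2' Hseps]]]; [exact Hs2 | exact Heps |].
  assert (HsdA : a k * s < dA).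
  { apply Rmult_lt_reg_r with (/ a k); [apply Rinv_0_lt_compat; lra|].
    replace (a k * s * / a k) with s by (field; lra). unfold Rdiv in Hs2dA. lra. }
  assert (Hcell : f (alph a k + a k * s) = d k * f s + c k * (alph a k + a k * s) + beta k).
  { rewrite (fixed_on_cell k) at 1;
      [| lia | split; [left | rewrite alph_S by lia]; nra].
    unfold Sinv. replace ((alph a k + a k * s - alph a k) / a k) with s by (field; lra).
    reflexivity. }
  specialize (HcontA (alph a k + a k * s) ltac:(nra) ltac:(rewrite Rabs_right; nra)).
  specialize (Hcont0 s ltac:(lra) ltac:(rewrite Rminus_0_r, Rabs_right; lra)).
  replace (f (alph a k) - (d k * f 0 + c k * alph a k + beta k))
    with (- (f (alph a k + a k * s) - f (alph a k)) + d k * (f s - f 0) + c k * (a k * s))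
    by (rewrite Hcell; ring).
  eapply Rle_lt_trans; [apply Rabs_triang|].
  eapply Rle_lt_trans; [apply Rplus_le_compat_r, Rabs_triang|].
  rewrite Rabs_Ropp, !Rabs_mult, (Rabs_right (a k)), (Rabs_right s) by lra.
  assert (Rabs (d k) * Rabs (f s - f 0) <= Rabs (d k) * eps)
    by (apply Rmult_le_compat_l; [apply Rabs_pos | lra]).
  assert (Rabs (c k) * (a k * s) <= Rabs (c k) * a k * eps).
  { rewrite <- Rmult_assoc. apply Rmult_le_compat_l; [|lra].
    apply Rmult_le_pos; [apply Rabs_pos | lra]. }
  lra.
Qed.

Lemma fixed_point_on_cell k u :
  (1 <= k <= n)%nat -> 0 <= u <= 1 ->
  f (Smap a k u) = d k * f u + c k * Smap a k u + beta k.
Proof.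
  intros Hk Hu. pose proof (a_pos k Hk). pose proof (alph_range k ltac:(lia)).
  assert (Hinv : Sinv a k (Smap a k u) = u) by (unfold Sinv, Smap; field; lra).
  assert (Hhi : Smap a k u <= alph a (S k)) by (unfold Smap; rewrite alph_S by lia; nra).
  destruct (Rle_lt_dec u 0) as [Hu0 | Hu0]; [destruct (Nat.eq_dec k 1) as [Hk1 | Hk1]|].
  - rewrite (fixed_on_cell k) at 1
      by (lia || (split; [right; split; [exact Hk1 | unfold Smap; nra] | exact Hhi])).
    now rewrite Hinv.
  - replace u with 0 by lra. unfold Smap. rewrite Rmult_0_r, Rplus_0_l.
    apply fixed_at_left_end. lia.
  - rewrite (fixed_on_cell k) at 1 by (lia || (split; [left; unfold Smap; nra | exact Hhi])).
    now rewrite Hinv.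
Qed.

Lemma increment_on_cell k u v :
  (1 <= k <= n)%nat -> 0 <= u <= 1 -> 0 <= v <= 1 ->
  f (Smap a k u) - f (Smap a k v) = d k * (f u - f v) + c k * (a k * (u - v)).
Proof.
  intros Hk Hu Hv. rewrite !fixed_point_on_cell by assumption. unfold Smap. ring.
Qed.

(** * The Hoelder estimate *)

Section GaugeBound.

Variables (al E C h0 r : R).
Hypothesis al_range : 0 < al <= 1.
Hypothesis E_ge0 : 0 <= E.
Hypothesis C_ge0 : 0 <= C.
Hypothesis h0_pos : 0 < h0.
Hypothesis a_range : forall k, (1 <= k <= n)%nat -> h0 <= a k <= r.
Hypothesis r_lt1 : r < 1.
Hypothesis d_small : forall k, (1 <= k <= n)%nat -> Rabs (d k) <= Rpower (a k) al.
Hypothesis c_expanding : forall k, (1 <= k <= n)%nat ->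
  a k < Rabs (d k) -> Rabs (c k) * a k <= E * (Rabs (d k) - a k).
Hypothesis c_margin : forall k, (1 <= k <= n)%nat ->
  Rabs (c k) + E <= C * (1 - Rpower (a k) (1 - al)).
Hypothesis large_scale : forall x y h, 0 <= x <= 1 -> 0 <= y <= 1 -> h0 <= h <= 1 ->
  Rabs (f x - f y) <= hoelder_gauge C E al h.

Lemma cell_gauge_step k u v C' :
  (1 <= k <= n)%nat -> 0 <= u <= 1 -> 0 <= v <= 1 -> u <> v -> C <= C' ->
  Rabs (f u - f v) <= hoelder_gauge C' E al (Rabs (u - v)) ->
  Rabs (f (Smap a k u) - f (Smap a k v)) <= hoelder_gauge C' E al (a k * Rabs (u - v)).
Proof.
  intros Hk Hu Hv Huv HCC' Hbound.
  pose proof (a_range k Hk). pose proof (a_pos k Hk).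
  assert (Hduv : 0 < Rabs (u - v) <= 1) by (split; [apply Rabs_pos_lt | apply Rabs_le]; lra).
  rewrite increment_on_cell by assumption.
  eapply Rle_trans; [apply Rabs_triang|].
  rewrite !Rabs_mult, (Rabs_right (a k)) by lra.
  apply (gauge_step al (a k)); try lra; auto.
  - assert (Rpower (a k) (1 - al) <= 1).
    { rewrite <- (Rpower_O (a k)) at 2 by lra. apply Rpower_le_exponent; lra. }
    apply Rle_trans with (C * (1 - Rpower (a k) (1 - al))); [now apply c_margin|].
    apply Rmult_le_compat_r; lra.
  - split; nra.
  - now replace (a k * Rabs (u - v) / a k) with (Rabs (u - v)) by (field; lra).
Qed.

Lemma fixed_point_increment k p sigma :
  (1 <= k <= n)%nat -> Smap a k p = p -> Rabs sigma = 1 ->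
  (forall t, 0 <= t <= 1 -> 0 <= p + sigma * t <= 1) ->
  forall h, 0 < h <= 1 -> Rabs (f (p + sigma * h) - f p) <= hoelder_gauge C E al h.
Proof.
  intros Hk Hfix Hsigma Hsweep.
  assert (Hp : 0 <= p <= 1) by (specialize (Hsweep 0); rewrite Rmult_0_r, Rplus_0_r in Hsweep; lra).
  assert (Hmap : forall t, Smap a k (p + sigma * t) = p + sigma * (a k * t)).
  { intros t. unfold Smap in *. rewrite <- Hfix at 2. ring. }
  pose proof (a_range k Hk) as Hak.
  intros h [Hh Hh1]. revert Hh1. pattern h.
  apply (scale_induction _ h0 r); try lra.
  - intros h' Hh' Hh'1. apply large_scale; [apply Hsweep; lra | exact Hp | lra].
  - intros h' [Hh' Hh'0] IH _.
    set (t := h' / a k).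
    assert (Ht : 0 < t <= 1) by (apply Rdiv_in_unit; lra).
    assert (Hdist : Rabs (p + sigma * t - p) = t).
    { replace (p + sigma * t - p) with (sigma * t) by ring.
      rewrite Rabs_mult, Hsigma, Rabs_right; lra. }
    assert (Hrec : Rabs (f (p + sigma * t) - f p)
                   <= hoelder_gauge C E al (Rabs (p + sigma * t - p))).
    { rewrite Hdist. apply IH; [|lra]. unfold t, Rdiv. apply Rmult_le_compat_l; [lra|].
      apply Rinv_le_contravar; lra. }
    assert (Hne : p + sigma * t <> p).
    { intros Heq. rewrite Heq, Rminus_diag, Rabs_R0 in Hdist. lra. }
    pose proof (cell_gauge_step k (p + sigma * t) p C Hk (Hsweep t ltac:(lra)) Hp Hne
                  (Rle_refl C) Hrec) as Hstep.
    rewrite Hmap, Hfix, Hdist in Hstep. unfold t in Hstep.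
    now replace (a k * (h' / a k)) with h' in Hstep by (field; lra).
Qed.

Lemma increment_at_0 h : 0 < h <= 1 -> Rabs (f h - f 0) <= hoelder_gauge C E al h.
Proof.
  intros Hh. replace h with (0 + 1 * h) at 1 by ring.
  apply (fixed_point_increment 1); try lia; try lra.
  - unfold Smap. rewrite alph_1. ring.
  - apply Rabs_R1.
  - intros t Ht. lra.
Qed.

Lemma increment_at_1 h : 0 < h <= 1 -> Rabs (f (1 - h) - f 1) <= hoelder_gauge C E al h.
Proof.
  intros Hh. replace (1 - h) with (1 + -1 * h) by ring.
  apply (fixed_point_increment n); try lia; try lra.
  - unfold Smap. rewrite Rmult_1_r, Rplus_comm, <- (alph_S a n) by lia. exact alph_last.
  - rewrite Rabs_left; lra.
  - intros t Ht. lra.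
Qed.

Lemma increment_at_left_end k s :
  (1 <= k <= n)%nat -> 0 < s <= h0 ->
  Rabs (f (alph a k + s) - f (alph a k)) <= hoelder_gauge C E al s.
Proof.
  intros Hk Hs. pose proof (a_range k Hk). pose proof (a_pos k Hk).
  assert (Ht : 0 < s / a k <= 1) by (apply Rdiv_in_unit; lra).
  assert (Hdist : Rabs (s / a k - 0) = s / a k) by (rewrite Rminus_0_r, Rabs_right; lra).
  assert (Hstep : Rabs (f (Smap a k (s / a k)) - f (Smap a k 0))
                  <= hoelder_gauge C E al (a k * Rabs (s / a k - 0))).
  { apply cell_gauge_step; try lia; try lra. rewrite Hdist. now apply increment_at_0. }
  rewrite Hdist in Hstep. replace (a k * (s / a k)) with s in Hstep by (field; lra).
  replace (Smap a k (s / a k)) with (alph a k + s) in Hstep by (unfold Smap; field; lra).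
  now replace (Smap a k 0) with (alph a k) in Hstep by (unfold Smap; ring).
Qed.

Lemma increment_at_right_end k s :
  (1 <= k <= n)%nat -> 0 < s <= h0 ->
  Rabs (f (alph a (S k) - s) - f (alph a (S k))) <= hoelder_gauge C E al s.
Proof.
  intros Hk Hs. pose proof (a_range k Hk). pose proof (a_pos k Hk).
  assert (Ht : 0 < s / a k <= 1) by (apply Rdiv_in_unit; lra).
  assert (Hdist : Rabs (1 - s / a k - 1) = s / a k).
  { replace (1 - s / a k - 1) with (- (s / a k)) by ring. rewrite Rabs_Ropp, Rabs_right; lra. }
  assert (Hstep : Rabs (f (Smap a k (1 - s / a k)) - f (Smap a k 1))
                  <= hoelder_gauge C E al (a k * Rabs (1 - s / a k - 1))).
  { apply cell_gauge_step; try lia; try lra. rewrite Hdist. now apply increment_at_1. }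
  rewrite Hdist in Hstep. replace (a k * (s / a k)) with s in Hstep by (field; lra).
  replace (Smap a k (1 - s / a k)) with (alph a (S k) - s) in Hstep
    by (unfold Smap; rewrite alph_S by lia; field; lra).
  now replace (Smap a k 1) with (alph a (S k)) in Hstep
    by (unfold Smap; rewrite alph_S by lia; ring).
Qed.

Lemma increment_across_node k x y :
  (2 <= k <= n)%nat -> 0 <= x < alph a k -> alph a k < y <= 1 -> y - x <= h0 ->
  Rabs (f x - f y) <= 2 * C * Rpower (y - x) al.
Proof.
  intros Hk Hx Hy Hxy. destruct k as [|k]; [lia|].
  pose proof (increment_at_right_end k (alph a (S k) - x) ltac:(lia) ltac:(lra)) as Hleft.
  pose proof (increment_at_left_end (S k) (y - alph a (S k)) ltac:(lia) ltac:(lra)) as Hright.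
  replace (alph a (S k) - (alph a (S k) - x)) with x in Hleft by ring.
  replace (alph a (S k) + (y - alph a (S k))) with y in Hright by ring.
  assert (hoelder_gauge C E al (alph a (S k) - x) <= C * Rpower (y - x) al)
    by (apply hoelder_gauge_le; lra).
  assert (hoelder_gauge C E al (y - alph a (S k)) <= C * Rpower (y - x) al)
    by (apply hoelder_gauge_le; lra).
  replace (f x - f y) with ((f x - f (alph a (S k))) - (f y - f (alph a (S k)))) by ring.
  eapply Rle_trans; [apply Rabs_triang|]. rewrite Rabs_Ropp. lra.
Qed.

Lemma increment_gauge_bound h :
  0 < h -> forall x, 0 <= x -> x + h <= 1 ->
  Rabs (f x - f (x + h)) <= hoelder_gauge (2 * C + E) E al h.
Proof.
  intros Hh. pose proof (a_range 1 ltac:(lia)). pattern h.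
  apply (scale_induction _ h0 r); try lra.
  - intros h' Hh' x Hx Hxh.
    apply Rle_trans with (hoelder_gauge C E al h'); [apply large_scale; lra|].
    unfold hoelder_gauge. pose proof (Rpower_pos h' al). nra.
  - intros h' [Hh' Hh'0] IH x Hx Hxh.
    destruct (exists_cell a n (x + h')) as [k [Hk [Hlo Hhi]]]; [rewrite alph_last; lra|].
    pose proof (a_range k Hk). pose proof (a_pos k Hk).
    pose proof (alph_range k ltac:(lia)). rewrite alph_S in Hhi by lia.
    destruct (Rle_lt_dec (alph a k) x) as [Hsame | Hcross].
    + set (u := (x - alph a k) / a k). set (t := h' / a k).
      assert (Hdist : Rabs (u - (u + t)) = t).
      { replace (u - (u + t)) with (- t) by ring.
        rewrite Rabs_Ropp, Rabs_right; [reflexivity | apply Rle_ge, Rlt_le, Rdiv_lt_0_compat; lra]. }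
      assert (Hu : 0 <= u) by (apply Rmult_le_pos; [lra | apply Rlt_le, Rinv_0_lt_compat; lra]).
      assert (Hut : u + t <= 1).
      { unfold u, t. apply Rmult_le_reg_r with (a k); [lra|]. field_simplify; lra. }
      assert (Ht : 0 < t) by (apply Rdiv_lt_0_compat; lra).
      assert (Hstep : Rabs (f (Smap a k u) - f (Smap a k (u + t)))
                      <= hoelder_gauge (2 * C + E) E al (a k * Rabs (u - (u + t)))).
      { apply cell_gauge_step; try lia; try lra. rewrite Hdist. apply IH; [|lra|lra].
        unfold t, Rdiv. apply Rmult_le_compat_l; [lra | apply Rinv_le_contravar; lra]. }
      replace (Smap a k u) with x in Hstep by (unfold Smap, u; field; lra).
      replace (Smap a k (u + t)) with (x + h') in Hstep by (unfold Smap, u, t; field; lra).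
      rewrite Hdist in Hstep. unfold t in Hstep.
      now replace (a k * (h' / a k)) with h' in Hstep by (field; lra).
    + assert (Hk2 : (2 <= k)%nat).
      { destruct (Nat.eq_dec k 1) as [-> | Hk1]; [rewrite alph_1 in Hcross; lra | lia]. }
      eapply Rle_trans; [apply (increment_across_node k); lia || lra|].
      replace (x + h' - x) with h' by ring. unfold hoelder_gauge.
      assert (h' <= Rpower h' al) by (apply Rpower_ge_self; lra). nra.
Qed.

End GaugeBound.

Lemma self_similar_hoelder al :
  0 < al < 1 -> (forall k, (1 <= k <= n)%nat -> Rabs (d k) <= Rpower (a k) al) ->
  exists K, 0 <= K /\ forall x y, 0 <= x <= 1 -> 0 <= y <= 1 ->
    Rabs (f x - f y) <= K * Rpower (Rabs (x - y)) al.
Proof.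
  intros Hal Hd.
  assert (Ha : forall k, (1 <= k <= n)%nat -> 0 < a k < 1)
    by (intros k Hk; split; [apply a_pos | apply a_lt_1]; exact Hk).
  destruct (finite_argmin n a ltac:(lia)) as [j0 [Hj0 Hmin]].
  destruct (finite_argmax n a ltac:(lia)) as [j1 [Hj1 Hmax]].
  pose proof (Ha j0 Hj0). pose proof (Ha j1 Hj1).
  destruct (exists_correction_constant n a c d) as [E [HE Hexpand]].
  destruct (cont01_bounded f f_cont) as [M HM].
  destruct (exists_margin_constant n a c al E ((2 * M + E) / Rpower (a j0) al) Ha ltac:(lra))
    as [C [HC [HCM Hmargin]]].
  assert (Hlarge : forall x y h, 0 <= x <= 1 -> 0 <= y <= 1 -> a j0 <= h <= 1 ->
            Rabs (f x - f y) <= hoelder_gauge C E al h).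
  { intros x y h Hx Hy Hh.
    assert (Rabs (f x - f y) <= 2 * M).
    { unfold Rminus. eapply Rle_trans; [apply Rabs_triang|]. rewrite Rabs_Ropp.
      pose proof (HM x Hx). pose proof (HM y Hy). lra. }
    assert (2 * M + E <= C * Rpower (a j0) al).
    { pose proof (Rpower_pos (a j0) al).
      apply Rmult_le_compat_r with (r := Rpower (a j0) al) in HCM; [|lra].
      now replace ((2 * M + E) / Rpower (a j0) al * Rpower (a j0) al) with (2 * M + E)
        in HCM by (field; lra). }
    assert (C * Rpower (a j0) al <= C * Rpower h al)
      by (apply Rmult_le_compat_l; [exact HC | apply Rle_Rpower_l; lra]).
    unfold hoelder_gauge. nra. }
  exists (2 * C + E). split; [lra|].
  assert (Hordered : forall x y, 0 <= x -> x < y -> y <= 1 ->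
            Rabs (f x - f y) <= (2 * C + E) * Rpower (y - x) al).
  { intros x y Hx Hxy Hy. replace y with (x + (y - x)) at 1 by ring.
    eapply Rle_trans.
    - apply (increment_gauge_bound al E C (a j0) (a j1)); auto; lra.
    - unfold hoelder_gauge. nra. }
  intros x y Hx Hy. destruct (Rtotal_order x y) as [Hlt | [-> | Hgt]].
  - rewrite (Rabs_minus_sym x y), (Rabs_right (y - x)) by lra. apply Hordered; lra.
  - rewrite !Rminus_diag, !Rabs_R0. pose proof (Rpower_pos 0 al). nra.
  - rewrite (Rabs_minus_sym (f x)), (Rabs_right (x - y)) by lra. apply Hordered; lra.
Qed.

End SelfSimilarFunction.

Theorem theorem2 (n : nat) (a c d beta : nat -> R) (f : R -> R) :
  (2 <= n)%nat ->
  (forall k, (1 <= k <= n)%nat -> 0 < a k) ->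
  sum1 n a = 1 ->
  (forall k, (1 <= k <= n)%nat -> Rabs (d k) < 1) ->
  cont01 f ->
  (forall t, 0 <= t <= 1 -> f t = Gop n a c d beta f t) ->
  (exists i, (1 <= i <= n)%nat /\ Rabs (d i) > a i) ->
  forall al : R, 0 < al <= 1 ->
  (forall j, (1 <= j <= n)%nat -> d j <> 0 -> al <= ln (Rabs (d j)) / ln (a j)) ->
  exists C : R, 0 <= C /\
    forall x y, 0 <= x <= 1 -> 0 <= y <= 1 ->
      Rabs (f x - f y) <= C * Rpower (Rabs (x - y)) al.
Proof.
  intros Hn Ha Hsum _ Hcont Hfix [i [Hi Hdi]] al Hal Hratio.
  assert (Ha1 : forall k, (1 <= k <= n)%nat -> 0 < a k < 1)
    by (intros k Hk; split; [apply Ha | apply (a_lt_1 n a)]; assumption).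
  assert (Hd : forall k, (1 <= k <= n)%nat -> Rabs (d k) <= Rpower (a k) al).
  { intros k Hk. destruct (Req_dec (d k) 0) as [-> | Hdk].
    - rewrite Rabs_R0. left. apply Rpower_pos.
    - apply Rpower_ge_of_log_ratio; [apply Ha1, Hk | apply Rabs_pos_lt, Hdk | now apply Hratio]. }
  assert (Hal1 : al < 1).
  { destruct (Rlt_or_le al 1) as [Hlt | Hge]; [exact Hlt|].
    pose proof (Hd i Hi). pose proof (Ha1 i Hi).
    assert (Rpower (a i) al <= Rpower (a i) 1) by (apply Rpower_le_exponent; lra).
    rewrite Rpower_1 in * by lra. lra. }
  apply (self_similar_hoelder n a c d beta f); auto; lra.
Qed.
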